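(* A family of structures $\mathfrak{K}$ is $\mathbf{nUs}$-learnable if and only if it is $\mathbf{Dec}$-learnable.
   Context: All structures are countable, have domain $\mathbb{N}$, are in a finite relational signature, and are identified with their atomic diagrams. A family of structures $\mathfrak{K}$ is a countable set of pairwise nonisomorphic such structures. $\mathcal{S}\restriction_s$ is the finite substructure of $\mathcal{S}$ on $\{0,\dots,s\}$. $\mathrm{LD}(\mathfrak{K})$ is the set of structures with domain $\mathbb{N}$ isomorphic to a member of $\mathfrak{K}$. The hypothesis space is $\{\ulcorner\mathcal{A}\urcorner:\mathcal{A}\in\mathfrak{K}\}\cup\{?\}$ (distinct formal symbols); a learner is an arbitrary function $\mathbf{M}$ from $\{\mathcal{S}\restriction_s:\mathcal{S}\in\mathrm{LD}(\mathfrak{K}),s\in\mathbb{N}\}$ to the hypothesis space. $\mathbf{M}$ $\mathbf{Ex}$-learns $\mathfrak{K}$ if for every $\mathcal{S}\in\mathrm{LD}(\mathfrak{K})$, $\mathbf{M}(\mathcal{S}\restriction_n)$ is eventually constantly $\ulcorner\mathcal{A}\urcorner$ where $\mathcal{A}\in\mathfrak{K}$, $\mathcal{A}\cong\mathcal{S}$. $\mathbf{M}$ $\mathbf{nUs}$-learns $\mathfrak{K}$ if it $\mathbf{Ex}$-learns $\mathfrak{K}$ and for every $\mathcal{S}\in\mathrm{LD}(\mathfrak{K})$ with $\mathcal{S}\cong\mathcal{A}\in\mathfrak{K}$, if $n_0$ is least with $\mathbf{M}(\mathcal{S}\restriction_{n_0})=\ulcorner\mathcal{A}\urcorner$ then $\mathbf{M}(\mathcal{S}\restriction_m)=\ulcorner\mathcal{A}\urcorner$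 for all $m>n_0$. $\mathbf{M}$ $\mathbf{Dec}$-learns $\mathfrak{K}$ if it $\mathbf{Ex}$-learns $\mathfrak{K}$ and for every $\mathcal{S}\in\mathrm{LD}(\mathfrak{K})$, every $\mathcal{A}\in\mathfrak{K}$ and every $n$: if $\mathbf{M}(\mathcal{S}\restriction_n)=\ulcorner\mathcal{A}\urcorner\neq\mathbf{M}(\mathcal{S}\restriction_{n+1})$ then $\mathbf{M}(\mathcal{S}\restriction_m)\neq\ulcorner\mathcal{A}\urcorner$ for all $m>n$. A family is $\mathbf{nUs}$-/$\mathbf{Dec}$-learnable if some learner $\mathbf{nUs}$-/$\mathbf{Dec}$-learns it. *)

From mathcomp Require Import all_boot.
Set Implicit Arguments. Unset Strict Implicit. Unset Printing Implicit Defensive.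

(* A finite relational signature: the list of arities of its relation symbols. *)
Definition signature := seq nat.

(* A structure with domain nat, identified with its atomic diagram:
   for each relation symbol i (of arity nth 0 sg i), its characteristic function. *)
Definition structure (sg : signature) :=
  forall i : 'I_(size sg), (nth 0 sg i).-tuple nat -> bool.

Definition iso (sg : signature) (A B : structure sg) : Prop :=
  exists f g : nat -> nat,
    [/\ cancel f g, cancel g f &
        forall (i : 'I_(size sg)) (t : (nth 0 sg i).-tuple nat),
          B i (map_tuple f t) = A i t].

(* The finite substructure S|_s on {0,...,s}: the number s together with the
   diagram of S restricted to tuples from {0,...,s} (false elsewhere). *)
Definition restr (sg : signature) (S : structure sg) (s : nat)
  : nat * structure sg :=
  (s, fun (i : 'I_(size sg)) (t : (nth 0 sg i).-tuple nat) =>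
        all (fun x => x <= s) t && S i t).

(* A family of structures: indexed by a countable type I (the formal symbols
   of the hypothesis space), pairwise nonisomorphic. *)
Definition struct_family (sg : signature) (I : countType) (K : I -> structure sg) : Prop :=
  forall i j : I, iso (K i) (K j) -> i = j.

Definition LD (sg : signature) (I : countType) (K : I -> structure sg)
  (S : structure sg) : Prop := exists i, iso S (K i).

(* A learner: maps finite restrictions to hypotheses; Some i = the code of K i,
   None = '?'. *)
Definition learner (sg : signature) (I : countType) := nat * structure sg -> option I.

Definition Ex_learns (sg : signature) (I : countType) (K : I -> structure sg)
  (M : learner sg I) : Prop :=
  forall S, LD K S ->
    exists i, iso S (K i) /\
      exists n0, forall n, n0 <= n -> M (restr S n) = Some i.

Definition nUs_learns (sg : signature) (I : countType) (K : I -> structure sg)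
  (M : learner sg I) : Prop :=
  Ex_learns K M /\
  forall S i, LD K S -> iso S (K i) ->
    forall n0, M (restr S n0) = Some i ->
      (forall k, k < n0 -> M (restr S k) <> Some i) ->
      forall m, n0 < m -> M (restr S m) = Some i.

Definition Dec_learns (sg : signature) (I : countType) (K : I -> structure sg)
  (M : learner sg I) : Prop :=
  Ex_learns K M /\
  forall S, LD K S -> forall (j : I) (n : nat),
    M (restr S n) = Some j -> M (restr S n.+1) <> Some j ->
    forall m, n < m -> M (restr S m) <> Some j.

Definition nUs_learnable (sg : signature) (I : countType) (K : I -> structure sg) :=
  exists M : learner sg I, nUs_learns K M.

Definition Dec_learnable (sg : signature) (I : countType) (K : I -> structure sg) :=
  exists M : learner sg I, Dec_learns K M.

(* Dec-learning implies nUs-learning with the same learner: once it has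
   output the correct index, a Dec-learner that left it could never return,
   contradicting convergence (the correct index is unique since the family is
   pairwise nonisomorphic).  Conversely, an nUs-learner never abandons a
   correct hypothesis, so we may suppress every hypothesis the learner has
   already abandoned on the data seen so far: the resulting learner never
   returns to an abandoned hypothesis and still converges. *)
From Stdlib Require Import FunctionalExtensionality.
From mathcomp Require Import all_boot.
Set Implicit Arguments. Unset Strict Implicit.

Section Structures.

Variable sg : signature.

Lemma iso_sym (A B : structure sg) : iso A B -> iso B A.
Proof.
case=> f [g [fK gK fiso]]; exists g, f; split=> // i t.
have fgt : map_tuple f (map_tuple g t) = t.
  by apply: val_inj; rewrite /= -map_comp (eq_map gK) map_id.
by rewrite -[in RHS]fgt fiso.
Qed.

Lemma iso_trans (A B C : structure sg) : iso A B -> iso B C -> iso A C.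
Proof.
case=> f [g [fK gK fiso]] [f' [g' [fK' gK' fiso']]].
exists (f' \o f), (g \o g'); split; try exact: can_comp.
move=> i t; have -> : map_tuple (f' \o f) t = map_tuple f' (map_tuple f t).
  by apply: val_inj; rewrite /= map_comp.
by rewrite fiso' fiso.
Qed.

Lemma restr_restr (S : structure sg) n k :
  k <= n -> restr (restr S n).2 k = restr S k.
Proof.
move=> le_kn; congr pair.
apply: functional_extensionality_dep => i; apply: functional_extensionality_dep => t.
case bounded_k: (all _ t) => //=.
by rewrite (sub_all _ bounded_k) // => x /leq_trans; apply.
Qed.

End Structures.

Section Learners.

Variables (sg : signature) (I : countType).
Implicit Types (M : learner sg I) (S D : structure sg) (j : I).

Lemma family_index_unique (K : I -> structure sg) S i j :
  struct_family K -> iso S (K i) -> iso S (K j) -> i = j.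
Proof. by move=> Kfam Si Sj; apply: Kfam; apply: iso_trans (iso_sym Si) Sj. Qed.

Definition mind_change M D j k : bool :=
  (M (restr D k) == Some j) && (M (restr D k.+1) != Some j).

(* On [D|_n] the learner outputs what [M] outputs, except that a hypothesis [M]
   has already abandoned while reading [D|_n] is replaced by '?'. *)
Definition decisive M : learner sg I := fun p =>
  if M p is Some j then
    if has (mind_change M p.2 j) (iota 0 p.1) then None else Some j
  else None.

Lemma mind_change_restr M S n j k :
  k < n -> mind_change M (restr S n).2 j k = mind_change M S j k.
Proof. by move=> lt_kn; rewrite /mind_change !restr_restr // ltnW. Qed.

Lemma decisive_restr M S n j :
  decisive M (restr S n) = Some j <->
  M (restr S n) = Some j /\ ~~ has (mind_change M S j) (iota 0 n).
Proof.
have same_changes j' : has (mind_change M (restr S n).2 j') (iota 0 n) =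
                       has (mind_change M S j') (iota 0 n).
  by apply: eq_in_has => k; rewrite mem_iota => /andP[_ /mind_change_restr].
rewrite /decisive /=; case: (M _) => [j'|]; last by split=> // -[].
rewrite [has _ _]same_changes.
case: ifP => [chg | /negbT nochg]; first by split=> // -[[<-]]; rewrite chg.
by split=> [[<-] | [[<-]]].
Qed.

Lemma decisive_no_return M S j n m :
  decisive M (restr S n) = Some j -> decisive M (restr S n.+1) <> Some j ->
  n < m -> decisive M (restr S m) <> Some j.
Proof.
move=> /decisive_restr[Mn_j nochg_n] leave lt_nm /decisive_restr[_ /hasPn nochg_m].
have := nochg_m n; rewrite mem_iota lt_nm => /(_ isT) /negP; apply.
rewrite /mind_change Mn_j eqxx; apply/eqP => Mn1_j; apply: leave.
apply/decisive_restr; split=> //; apply/hasPn => k.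
rewrite mem_iota add0n ltnS => /andP[_]; rewrite leq_eqVlt => /orP[/eqP -> | lt_kn].
  by rewrite /mind_change Mn1_j eqxx andbF.
by move/hasPn: nochg_n; apply; rewrite mem_iota.
Qed.

Variable K : I -> structure sg.

Lemma nUs_no_mind_change M S i k :
  nUs_learns K M -> LD K S -> iso S (K i) -> ~~ mind_change M S i k.
Proof.
case=> _ nUs LS Si; apply/negP => /andP[/eqP Mk_i /eqP leave].
have seen_i : exists m, M (restr S m) == Some i by exists k; rewrite Mk_i.
case: (ex_minnP seen_i) => n0 /eqP Mn0_i n0_min.
apply/leave/(nUs S i LS Si n0 Mn0_i); last by rewrite ltnS n0_min ?Mk_i.
by move=> l lt_ln0 Ml_i; have := n0_min l; rewrite Ml_i eqxx leqNgt lt_ln0 => /(_ isT).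
Qed.

Lemma nUs_learns_decisive_Dec M : nUs_learns K M -> Dec_learns K (decisive M).
Proof.
move=> MnUs; split; last by move=> S _ j n dec_n leave m; apply: decisive_no_return.
move=> S LS; have [i [Si [n1 conv]]] := MnUs.1 S LS.
exists i; split=> //; exists n1 => n le_n1n; apply/decisive_restr; split; first exact: conv.
by apply/hasPn => k _; apply: nUs_no_mind_change Si.
Qed.

Lemma Dec_learns_nUs M : struct_family K -> Dec_learns K M -> nUs_learns K M.
Proof.
move=> Kfam [MEx MDec]; split=> // S i LS Si n0 Mn0_i _ m lt_n0m.
have [i' [Si' [n1 conv]]] := MEx S LS.
have i'_i : i' = i by apply: family_index_unique Kfam Si' Si.
subst i'; have stays d : M (restr S (n0 + d)) = Some i.
  elim: d => [|d IH]; first by rewrite addn0.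
  rewrite addnS; case: (M (restr S (n0 + d).+1) =P Some i) => // leave; exfalso.
  apply: (MDec S LS i (n0 + d) IH leave (n1 + (n0 + d).+1)).
    by rewrite addnS ltnS leq_addl.
  by apply: conv; rewrite leq_addr.
by rewrite -(subnKC (ltnW lt_n0m)).
Qed.

End Learners.

Theorem mainTheorem10 (sg : signature) (I : countType) (K : I -> structure sg) :
  @struct_family sg I K -> (@nUs_learnable sg I K <-> @Dec_learnable sg I K).
Proof.
move=> Kfam; split=> -[M learns].
- by exists (decisive M); apply: nUs_learns_decisive_Dec.
- by exists M; apply: Dec_learns_nUs.
Qed.
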